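(* Let $(X,\|\cdot\|)$ be a convex Banach space and let $\{v_n\}_{n\in\mathbb{N}}\subset X$ be a sequence such that $\|v_{n+m}\|\le\|v_n+v_m\|$ for all $n,m\in\mathbb{N}$ and $\lim_{n\to\infty}\frac{\|v_n\|}{n}>0$. Then the limit $\lim_{n\to\infty}\frac{v_n}{n}$ exists in $X$ if and only if $\left\{\frac{v_n}{\|v_n\|}\right\}_{n\in\mathbb{N}}$ is a uniformly convex subset of $X$.
   Context: $\mathbb{N}=\{1,2,3,\dots\}$. A Banach space $X$ is convex if for all $u,v\in X$ with $u\ne v$ and $\|u\|=\|v\|=1$ we have $\|u+v\|<2$. A subset $S\subset X$ is called uniformly convex if for every $\varepsilon>0$ there exists $\delta\in(0,1)$ such that for all $u,v\in S$ with $\|u\|=\|v\|=1$ and $\|u-v\|\ge\varepsilon$ we have $\|u+v\|\le 2-\delta$. (Under the hypotheses, the limit $\lim_{n\to\infty}\|v_n\|/n$ exists and equals $\inf_n \|v_n\|/n$ by the classical Fekete lemma, so all $v_n$ are non-zero.) *)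

From HB Require Import structures.
From mathcomp Require Import all_boot all_order all_algebra.
From mathcomp Require Import all_classical all_reals all_analysis.
Set Implicit Arguments. Unset Strict Implicit. Unset Printing Implicit Defensive.
Import Order.TTheory GRing.Theory Num.Theory.
Import numFieldNormedType.Exports.
Local Open Scope classical_set_scope.
Local Open Scope ring_scope.

(* Strictly convex ("convex" in the paper) normed space. *)
Definition strictly_convex_space (R : realType) (X : normedModType R) : Prop :=
  forall u v : X, u <> v -> `|u| = 1 -> `|v| = 1 -> `|u + v| < 2.

Definition uniformly_convex_set (R : realType) (X : normedModType R)
    (S : set X) : Prop :=
  forall eps : R, 0 < eps -> exists delta : R, 0 < delta < 1 /\
    forall u v : X, S u -> S v -> `|u| = 1 -> `|v| = 1 ->
      eps <= `|u - v| -> `|u + v| <= 2 - delta.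

(* Subadditivity and Fekete's lemma give |v_n| >= n L, so the excess |v_n| - n L is
   nonnegative.  The unit vectors u_n = v_n / |v_n| satisfy v_n / n = (|v_n| / n) u_n with
   |v_n| / n -> L > 0, so v_n / n converges iff u_n does.

   If u_n -> e, then e is a unit vector, and strict convexity keeps |u_i + u_j| away from 2
   uniformly over the pairs with |u_i - u_j| >= eps: a pair with a late index is compared
   through e, and only finitely many pairs remain.

   Conversely, if {u_n} is uniformly convex, with modulus d for eps, then p <= k and
   |u_p - u_k| >= eps give |v_(k+p)| <= |v_k| + |v_p| - d p L, so the excess drops by at least
   d p L / 2 from k to k + p once p is large.  A nonnegative sequence cannot keep dropping,
   which makes u_n Cauchy, hence convergent in the Banach space X. *)

From HB Require Import structures.
From mathcomp Require Import all_boot all_order all_algebra.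
From mathcomp Require Import all_classical all_reals all_analysis.
From mathcomp Require Import ring lra.
Import Order.TTheory GRing.Theory Num.Theory.
Import numFieldNormedType.Exports.
Local Open Scope classical_set_scope.
Local Open Scope ring_scope.

Section Fekete.
Context {R : realType} {a : nat -> R}.
Hypothesis a_subadd :
  forall n m, (0 < n)%N -> (0 < m)%N -> a (n + m)%N <= a n + a m.

Lemma subadditive_mulSn_le k n : (0 < n)%N -> a (k.+1 * n)%N <= k.+1%:R * a n.
Proof.
move=> n0; elim: k => [|k IHk]; first by rewrite mul1n mul1r.
rewrite mulSn (le_trans (a_subadd _ _ n0 _)) ?muln_gt0 //.
by rewrite [k.+2%:R]mulrSr mulrDl mul1r addrC lerD2r.
Qed.

Lemma subadditive_ge_lim (L : R) n : (fun k => a k / k%:R) @ \oo --> L ->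
  (0 < n)%N -> n%:R * L <= a n.
Proof.
move=> aL n0; rewrite leNgt; apply/negP => aLn.
have n0R : 0 < n%:R :> R by rewrite ltr0n.
have gap_gt0 : 0 < L - a n / n%:R by rewrite subr_gt0 ltr_pdivrMr // mulrC.
have [N _ near_L] := cvgr_dist_lt _ _ aL _ gap_gt0.
have kn0 : 0 < (N.+1 * n)%:R :> R by rewrite ltr0n muln_gt0.
have kn_le : a (N.+1 * n)%N / (N.+1 * n)%:R <= a n / n%:R.
  rewrite natrM invfM mulrA ler_pM2r ?invr_gt0 //.
  by rewrite ler_pdivrMr ?ltr0n // mulrC subadditive_mulSn_le.
have /= := near_L (N.+1 * n)%N (leq_trans (leqnSn N) (leq_pmulr _ n0)).
by apply/negP; rewrite -leNgt (le_trans _ (ler_norm _)) // lerD2l lerN2.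
Qed.

End Fekete.

Lemma ge0_seq_small_drop {R : realType} (e : nat -> R) (c : R) (n m K : nat) :
  0 < c -> (forall k, 0 <= e k) ->
  exists2 k, (K <= k)%N & e k - c <= e (k + n)%N /\ e k - c <= e (k + m)%N.
Proof.
move=> c0 e_ge0; apply: contrapT => no_k.
have drop k : (K <= k)%N -> exists2 k', (K <= k')%N & e k' < e k - c.
  move=> Kk; have /not_andP[] : ~ (e k - c <= e (k + n)%N /\ e k - c <= e (k + m)%N).
    by move=> ?; apply: no_k; exists k.
  - by exists (k + n)%N; [rewrite (leq_trans Kk) ?leq_addr | rewrite ltNge; apply/negP].
  - by exists (k + m)%N; [rewrite (leq_trans Kk) ?leq_addr | rewrite ltNge; apply/negP].
have drops j : exists2 k, (K <= k)%N & e k <= e K - j%:R * c.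
  elim: j => [|j [k Kk ek]]; first by exists K; rewrite // mul0r subr0.
  have [k' Kk' ek'] := drop k Kk; exists k' => //.
  rewrite mulrSr mulrDl mul1r; lra.
have [k _] := drops (Num.truncn (e K / c)).+1.
have : e K < (Num.truncn (e K / c)).+1%:R * c by rewrite -ltr_pdivrMr // truncnS_gt.
have := e_ge0 k; lra.
Qed.

Lemma cauchy_seq_cvg {R : realType} {X : completeNormedModType R} (u : nat -> X) :
  (forall eps, 0 < eps -> exists N, forall n m, (N <= n)%N -> (N <= m)%N ->
     `|u n - u m| < eps) ->
  cvg (u @ \oo).
Proof.
move=> u_cauchy; apply: cauchy_cvg; apply: cauchy_exP => eps eps0.
have [N uN] := u_cauchy _ eps0.
by exists (u N), N => // n /= Nn; rewrite -ball_normE /ball_ /= uN.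
Qed.

Section Normalize.
Context {R : realType} {X : normedModType R}.

Lemma scale_norm_normalize (x : X) : `|x| *: (`|x|^-1 *: x) = x.
Proof.
have [->|x0] := eqVneq x 0; first by rewrite !scaler0.
by rewrite scalerA mulfV ?scale1r ?normr_eq0.
Qed.

Lemma norm_normalize (x : X) : x != 0 -> `| `|x|^-1 *: x| = 1.
Proof. by move=> x0; rewrite normrZ normfV normr_id mulVf ?normr_eq0. Qed.

Lemma norm_normalize_le1 (x : X) : `| `|x|^-1 *: x| <= 1.
Proof.
by have [->|/norm_normalize->//] := eqVneq x 0; rewrite scaler0 normr0.
Qed.

Lemma normD_le_normalize (x y : X) (d : R) :
  `| `|x|^-1 *: x + `|y|^-1 *: y| <= 2 - d ->
  `|x + y| <= `|x| + `|y| - d * Num.min `|x| `|y|.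
Proof.
wlog xy : x y / `|x| <= `|y|.
  move=> W; case/orP: (le_total `|x| `|y|) => [/W//|/W].
  by rewrite [x + y]addrC [_ *: x + _]addrC [`|x| + _]addrC minC.
rewrite (min_idPl xy) => uxy.
set ux := `|x|^-1 *: x in uxy; set uy := `|y|^-1 *: y in uxy.
have -> : x + y = `|x| *: (ux + uy) + (`|y| - `|x|) *: uy.
  by rewrite scalerDr scalerBl /ux /uy !scale_norm_normalize addrACA subrr addr0.
have yx_ge0 : 0 <= `|y| - `|x| by rewrite subr_ge0.
rewrite (le_trans (ler_normD _ _)) // (normrZ `|x|) (normrZ (`|y| - `|x|)).
rewrite normr_id ger0_norm //.
have := ler_wpM2l (normr_ge0 x) uxy.
have := ler_wpM2l yx_ge0 (norm_normalize_le1 y).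
nra.
Qed.

End Normalize.

Section ConvergentUnitSequence.
Context {R : realType} {X : normedModType R}.
Hypothesis X_sc : strictly_convex_space X.

Let gap (eps : R) (x y : X) := if eps <= `|x - y| then 2 - `|x + y| else 1.

Let gap_gt0 eps x y : 0 < eps -> `|x| = 1 -> `|y| = 1 -> 0 < gap eps x y.
Proof.
rewrite /gap => eps0 x1 y1; case: ifPn => // xy.
rewrite subr_gt0 X_sc // => x_eq_y.
by move: xy; rewrite x_eq_y subrr normr0 leNgt eps0.
Qed.

Let gap_normD {eps : R} {x y : X} : eps <= `|x - y| -> `|x + y| <= 2 - gap eps x y.
Proof. by rewrite /gap => ->; rewrite opprB addrCA subrr addr0. Qed.

Lemma uniformly_convex_range_cvg (u : nat -> X) (e : X) :
  (forall n, `|u n| = 1) -> u @ \oo --> e -> uniformly_convex_set (range u).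
Proof.
move=> u1 ue.
have e1 : `|e| = 1.
  have norm_ue : (fun n => `|u n|) @ \oo --> `|e| by apply: cvg_norm.
  rewrite (funext u1) in norm_ue.
  by rewrite -(norm_cvg_lim norm_ue) (norm_cvg_lim (cvg_cst _)).
move=> eps eps0.
have eps4 : 0 < eps / 4 by rewrite divr_gt0.
have [N0 _ near_e] := cvgr_dist_lt _ _ ue _ eps4.
pose d1 := \big[Num.min/1]_(i < N0) gap (eps / 2) (u i) e.
have d1_gt0 : 0 < d1 by apply: lt_bigmin => // i _; rewrite gap_gt0 ?divr_gt0.
have d1_le1 : d1 <= 1 by apply: bigmin_le_id.
have [N1 _ near_e'] := cvgr_dist_lt _ _ ue _ (divr_gt0 d1_gt0 (ltr0Sn _ 1)).
pose M := maxn N0 N1.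
pose d2 := \big[Num.min/1]_(ij : 'I_M * 'I_M) gap eps (u ij.1) (u ij.2).
have d2_gt0 : 0 < d2 by apply: lt_bigmin => // ij _; exact: gap_gt0.
have tail i j : eps <= `|u i - u j| -> (M <= j)%N -> `|u i + u j| <= 2 - d1 / 2.
  move=> uij Mj.
  have uje : `|e - u j| < eps / 4 by apply: near_e; rewrite /= (leq_trans _ Mj) ?leq_maxl.
  have uje' : `|e - u j| < d1 / 2 by apply: near_e'; rewrite /= (leq_trans _ Mj) ?leq_maxr.
  have tri := ler_distD e (u i) (u j).
  have iN0 : (i < N0)%N.
    by rewrite ltnNge; apply/negP => /near_e /=; rewrite distrC; lra.
  have uie : eps / 2 <= `|u i - e| by lra.
  have : d1 <= gap (eps / 2) (u i) e by exact: (bigmin_le _ (Ordinal iN0)).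
  have := gap_normD uie; have := ler_normD (u i + e) (u j - e).
  by rewrite addrACA subrr addr0 distrC -/d1 /=; lra.
exists (Num.min (d1 / 2) d2); split.
  by rewrite lt_min d2_gt0 divr_gt0 //= gt_min; apply/orP; left; lra.
move=> _ _ [i _ <-] [j _ <-] _ _ uij.
have le_d1 : Num.min (d1 / 2) d2 <= d1 / 2 by rewrite ge_min lexx.
have [Mj|jM] := leqP M j; first by have := tail i j uij Mj; lra.
have [Mi|iM] := leqP M i.
  by rewrite addrC; have := tail j i; rewrite distrC => /(_ uij Mi); lra.
have : d2 <= gap eps (u i) (u j) by exact: (bigmin_le _ (Ordinal iM, Ordinal jM)).
have := gap_normD uij; have : Num.min (d1 / 2) d2 <= d2 by rewrite ge_min lexx orbT.
lra.
Qed.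

End ConvergentUnitSequence.

Section SubadditiveNormSequence.
Context {R : realType} {X : normedModType R} {v : nat -> X} {L : R}.
Hypotheses (L_gt0 : 0 < L)
  (v_subadd : forall n m, (0 < n)%N -> (0 < m)%N -> `|v (n + m)%N| <= `|v n + v m|)
  (v_lim : (fun n => `|v n| / n%:R) @ \oo --> L).

Local Notation u n := (`|v n|^-1 *: v n).
Local Notation excess n := (`|v n| - n%:R * L).

Lemma mulnL_le_normv n : (0 < n)%N -> n%:R * L <= `|v n|.
Proof.
apply: subadditive_ge_lim v_lim => p q p0 q0.
exact: le_trans (v_subadd _ _ p0 q0) (ler_normD _ _).
Qed.

Lemma normv_gt0 n : (0 < n)%N -> 0 < `|v n|.
Proof. by move=> n0; rewrite (lt_le_trans _ (mulnL_le_normv _ n0)) // mulr_gt0 ?ltr0n. Qed.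

Lemma norm_normalizev n : (0 < n)%N -> `|u n| = 1.
Proof. by move=> n0; rewrite norm_normalize // -normr_gt0 normv_gt0. Qed.

Lemma excess_ge0 n : 0 <= excess n.
Proof. by case: n => [|n]; rewrite subr_ge0 ?mul0r // mulnL_le_normv. Qed.

Lemma excess_addn_le (d : R) p k : (0 < p)%N -> (p <= k)%N -> 0 <= d ->
  `|u p + u k| <= 2 - d -> excess (p + k) <= excess p + excess k - d * (p%:R * L).
Proof.
move=> p0 pk d0 /normD_le_normalize upk.
have k0 : (0 < k)%N := leq_trans p0 pk.
have pL_le_min : p%:R * L <= Num.min `|v p| `|v k|.
  by rewrite le_min mulnL_le_normv // (le_trans _ (mulnL_le_normv _ k0)) // ler_pM2r // ler_nat.
have := ler_wpM2l d0 pL_le_min; have := v_subadd _ _ p0 k0.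
rewrite natrD mulrDl; lra.
Qed.

(* With [c := d L / 2]: if [u p] and [u k] are [eps/2]-apart, [p <= k] and [p] is large, the
   excess drops by more than [c] from [k] to [k + p].  Some [k] beyond [n] and [m] admits no such
   drop for [p = n, m], so [u n] and [u m] are both close to [u k]. *)
Lemma normalize_cauchy :
  uniformly_convex_set [set u n | n in [set n | (0 < n)%N]] ->
  forall eps, 0 < eps -> exists N, forall n m, (N <= n)%N -> (N <= m)%N ->
    `|u n - u m| < eps.
Proof.
move=> v_uc eps eps0.
have [d [/andP[d0 _] d_uc]] := v_uc _ (divr_gt0 eps0 (ltr0Sn _ 1)).
pose c := d * L / 2.
have c0 : 0 < c by rewrite divr_gt0 ?mulr_gt0.
have [N _ near_L] := cvgr_dist_lt _ _ v_lim _ c0.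
have close p k : (N < p)%N -> (p <= k)%N -> excess k - c <= excess (k + p) ->
    `|u p - u k| < eps / 2.
  move=> Np pk no_drop; rewrite ltNge; apply/negP => far.
  have p0 : (0 < p)%N := leq_ltn_trans (leq0n N) Np.
  have k0 : (0 < k)%N := leq_trans p0 pk.
  have pR0 : 0 < p%:R :> R by rewrite ltr0n.
  have uc : `|u p + u k| <= 2 - d.
    apply: (d_uc _ _ _ _ _ _ far); rewrite ?norm_normalizev //.
    - by exists p.
    - by exists k.
  have := excess_addn_le _ _ _ p0 pk (ltW d0) uc; rewrite addnC => gain.
  have small : excess p < c * p%:R.
    have /= := near_L p (ltnW Np); rewrite distrC => /(le_lt_trans (ler_norm _)).
    by rewrite ltrBlDr ltr_pdivrMr // mulrDl [L * _]mulrC ltrBlDr.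
  have dpL : d * (p%:R * L) = 2 * (c * p%:R) by rewrite /c; field.
  have : c <= c * p%:R by rewrite ler_peMr ?ler1n // ltW.
  lra.
exists N.+1 => n m Nn Nm.
have [k Kk [drop_n drop_m]] := ge0_seq_small_drop _ _ n m (maxn n m) c0 excess_ge0.
rewrite (le_lt_trans (ler_distD (u k) _ _)) // [X in _ + X]distrC (splitr eps).
by rewrite ltrD // close // (leq_trans _ Kk) ?leq_maxl ?leq_maxr.
Qed.

Lemma normalize_cvg_of_div_cvg w : (fun n => n%:R^-1 *: v n) @ \oo --> w ->
  (fun n => u n) @ \oo --> L^-1 *: w.
Proof.
move=> vw; have : (fun n => (`|v n| / n%:R)^-1 *: (n%:R^-1 *: v n)) @ \oo --> L^-1 *: w.
  by apply: cvgZ => //; apply: cvgV => //; rewrite gt_eqF.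
apply: cvg_trans; apply: near_eq_cvg; exists 1%N => // n /= n0.
by rewrite scalerA invfM invrK mulfK // pnatr_eq0 -lt0n.
Qed.

Lemma div_cvg_of_normalize_cvg e : (fun n => u n) @ \oo --> e ->
  (fun n => n%:R^-1 *: v n) @ \oo --> L *: e.
Proof.
move=> ue; have : (fun n => (`|v n| / n%:R) *: u n) @ \oo --> L *: e by apply: cvgZ.
apply: cvg_trans; apply: near_eq_cvg; exists 1%N => // n /= n0.
by rewrite scalerA mulrAC mulfV ?mul1r // gt_eqF ?normv_gt0.
Qed.

End SubadditiveNormSequence.

Theorem mainTheorem9 (R : realType) (X : completeNormedModType R)
  (v : nat -> X) :
  strictly_convex_space X ->
  (forall n m : nat, (0 < n)%N -> (0 < m)%N -> `|v (n + m)%N| <= `|v n + v m|) ->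
  (exists L : R, 0 < L /\ (fun n : nat => `|v n| / n%:R) @ \oo --> L) ->
  (cvg ((fun n : nat => (n%:R)^-1 *: v n) @ \oo) <->
   uniformly_convex_set [set (`|v n|)^-1 *: v n | n in [set n : nat | (0 < n)%N]]).
Proof.
move=> X_sc v_subadd [L [L_gt0 v_lim]].
have norm_u := norm_normalizev L_gt0 v_subadd v_lim.
split => [/cvg_ex[w /(normalize_cvg_of_div_cvg L_gt0 v_lim) uw] | v_uc].
- have ushift_w : (fun n => `|v n.+1|^-1 *: v n.+1) @ \oo --> L^-1 *: w.
    by rewrite (cvg_shiftS (fun n => `|v n|^-1 *: v n)).
  move=> eps /(uniformly_convex_range_cvg X_sc _ _ (fun n => norm_u n.+1 isT) ushift_w).
  move=> [d [d01 d_uc]]; exists d; split => // _ _ [i i0 <-] [j j0 <-].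
  by apply: d_uc; [exists i.-1 | exists j.-1]; rewrite // prednK.
- apply/cvg_ex; exists (L *: lim ((fun n => `|v n|^-1 *: v n) @ \oo)).
  apply: (div_cvg_of_normalize_cvg L_gt0 v_subadd v_lim); apply: cauchy_seq_cvg.
  exact: (normalize_cauchy L_gt0 v_subadd v_lim).
Qed.
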